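(* Let $\sigma_k > 0$, let $U \sim \operatorname{Rayleigh}(1)$ (density $u e^{-u^2/2}$ on $u\ge 0$), and let $\theta$ be uniform on $(-\pi,\pi]$, independent of $U$. Set $a = \sigma_k U$ and $z = a e^{i\theta}$. Let $Q_a$ be an $N_a$-level Lloyd–Max quantizer for $U$ under squared error, with normalized distortion $C_{\mathrm{LM}}(N_a) = \mathbb{E}(U-Q_a(U))^2$, and set $\hat a = \sigma_k Q_a(U)$. Let $N_p \ge 1$, $h = \pi/N_p$, and let $\hat\theta$ be obtained by rounding $\theta$ to the nearest of the $N_p$ uniform phase levels $\{(2k+1)h : k = 0,1,\dots,N_p-1\}$ (modulo $2\pi$). Let $\hat z = \hat a e^{i\hat\theta}$. Define $M_a(N_a) = \mathbb{E}[U Q_a(U)]$ and $\eta(N_p) = 1 - \frac{\sin(\pi/N_p)}{\pi/N_p}$. Then $$\mathbb{E}\|z-\hat z\|^2 = \sigma_k^2 C_{\mathrm{LM}}(N_a) + 2\sigma_k^2 M_a(N_a)\,\eta(N_p).$$ Furthermore, if $Q_a$ is a centroid Lloyd–Max quantizer, then $M_a(N_a) = 2 - C_{\mathrm{LM}}(N_a)$, hence $$\mathbb{E}\|z-\hat z\|^2 = \sigma_k^2\Bigl[C_{\mathrm{LM}}(N_a) + 2\bigl(2-C_{\mathrm{LM}}(N_a)\bigr)\eta(N_p)\Bigr]$$ and $$\mathbb{E}\|z-\hat z\|^2 \le \sigma_k^2\Bigl[C_{\mathrm{LM}}(N_a) + \bigl(2-C_{\mathrm{LM}}(N_a)\bi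gr)\frac{\pi^2}{3N_p^2}\Bigr].$$
   Context: An $N_a$-level scalar quantizer $Q_a$ partitions $[0,\infty)$ into $N_a$ cells and maps each cell to a reconstruction level. A centroid Lloyd–Max quantizer for $U$ is one whose reconstruction level on each cell equals the conditional mean of $U$ given that $U$ lies in the cell, i.e. $Q_a(U) = \mathbb{E}[U \mid Q_a(U)]$. The phase grid has adjacent levels spaced by $2h$. *)

From mathcomp Require Import all_boot all_order all_algebra.
From mathcomp Require Import all_classical all_reals all_analysis.
Set Implicit Arguments. Unset Strict Implicit. Unset Printing Implicit Defensive.
Import Order.TTheory GRing.Theory Num.Theory.
Local Open Scope classical_set_scope.
Local Open Scope ring_scope.

Section Defs.
Variable R : realType.
Notation mu := (@lebesgue_measure R).

Definition rayleigh_pdf (u : R) : R := u * expR (- (u ^+ 2) / 2).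

Definition E_U (f : R -> R) : \bar R :=
  (\int[mu]_(u in [set u : R | (0 <= u)%R]) (f u * rayleigh_pdf u)%:E)%E.

(* E[f(U, theta)] for U ~ Rayleigh(1) and theta ~ Uniform(-pi, pi],
   independent: integral against the product density. *)
Definition E_joint (f : R -> R -> R) : \bar R :=
  (\int[mu]_(u in [set u : R | (0 <= u)%R])
     \int[mu]_(t in [set t : R | (- pi < t <= pi)%R])
        (f u t * (rayleigh_pdf u / (2 * pi)))%:E)%E.

Definition qcell (t : nat -> R) (N i : nat) : set R :=
  if (i.+1 < N)%N then [set u | t i <= u < t i.+1] else [set u | t i <= u].

Definition quantizer_with (N : nat) (t y : nat -> R) (Q : R -> R) : Prop :=
  t 0%N = 0 /\ (forall i, (i.+1 < N)%N -> t i < t i.+1) /\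
  (forall i u, (i < N)%N -> qcell t N i u -> Q u = y i).

Definition quantizer (N : nat) (Q : R -> R) : Prop :=
  exists t y, quantizer_with N t y Q.

Definition C_LM (Q : R -> R) : \bar R := E_U (fun u => (u - Q u) ^+ 2).
Definition M_a (Q : R -> R) : \bar R := E_U (fun u => u * Q u).

Definition lloyd_max (N : nat) (Q : R -> R) : Prop :=
  quantizer N Q /\ forall Q', quantizer N Q' -> (C_LM Q <= C_LM Q')%E.

(* centroid condition: each reconstruction level is the conditional mean
   of U given that U lies in the cell (written as y_i P(cell) = E[U; cell]). *)
Definition centroid_quantizer (N : nat) (Q : R -> R) : Prop :=
  exists t y, quantizer_with N t y Q /\
    forall i, (i < N)%N ->
      ((y i)%:E * \int[mu]_(u in qcell t N i) (rayleigh_pdf u)%:E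
       = \int[mu]_(u in qcell t N i) (u * rayleigh_pdf u)%:E)%E.

(* phase quantizer: round theta to the nearest of the levels (2k+1)h,
   h = pi/Np, modulo 2 pi (cells [2kh, 2(k+1)h), ties broken upward) *)
Definition phase_h (Np : nat) : R := pi / Np%:R.
Definition phase_q (Np : nat) (th : R) : R :=
  ((2 * (Num.floor (th / (2 * phase_h Np)))%:~R + 1) * phase_h Np).

Definition eta (Np : nat) : R := 1 - sin (pi / Np%:R) / (pi / Np%:R).

(* |z - zhat|^2 with z = sigma u e^{i t}, zhat = sigma Q(u) e^{i phase_q t} *)
Definition sq_err (sigma : R) (Q : R -> R) (Np : nat) (u t : R) : R :=
  (sigma * u * cos t - sigma * Q u * cos (phase_q Np t)) ^+ 2 +
  (sigma * u * sin t - sigma * Q u * sin (phase_q Np t)) ^+ 2.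

End Defs.

(* Expanding |z - zhat|^2 in polar form gives
   sigma^2 (U^2 + Q(U)^2) - 2 sigma^2 U Q(U) cos (theta - thetahat).
   On each phase cell of width 2h the error theta - thetahat runs uniformly over
   [-h, h), so E cos (theta - thetahat) = sin h / h = 1 - eta, and integrating out
   theta leaves sigma^2 E (U - Q U)^2 + 2 sigma^2 eta E [U Q U].
   For a centroid quantizer the error U - Q(U) is orthogonal to Q(U) cell by cell,
   hence M = E [Q(U)^2] >= 0 and, since E U^2 = 2, C = 2 - M.
   The last bound is 1 - sin h / h <= h^2 / 6. *)

From mathcomp Require Import all_boot all_order all_algebra.
From mathcomp Require Import all_classical all_reals all_analysis.
From mathcomp Require Import measurable_realfun ring lra.
Set Implicit Arguments. Unset Strict Implicit. Unset Printing Implicit Defensive.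
Import Order.TTheory GRing.Theory Num.Theory numFieldNormedType.Exports.
Local Open Scope classical_set_scope.
Local Open Scope ring_scope.

Section integral_EFin_linear.
Context d (T : measurableType d) (R : realType).
Variables (mu : {measure set T -> \bar R}) (D : set T).
Hypothesis mD : measurable D.

Lemma integrable_EFinZ (k : R) (f : T -> R) :
  mu.-integrable D (fun x => (f x)%:E) -> mu.-integrable D (fun x => (k * f x)%:E).
Proof. by move=> /(integrableZl mD k); apply: eq_integrable. Qed.

Lemma integrable_EFin_comb (a b : R) (f g : T -> R) :
  mu.-integrable D (fun x => (f x)%:E) -> mu.-integrable D (fun x => (g x)%:E) ->
  mu.-integrable D (fun x => (a * f x + b * g x)%:E).
Proof.
move=> /(integrable_EFinZ a) fi /(integrable_EFinZ b) gi.
by apply: eq_integrable (integrableD mD fi gi) => // x _; rewrite EFinD.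
Qed.

Lemma integral_EFin_comb (a b : R) (f g : T -> R) :
  mu.-integrable D (fun x => (f x)%:E) -> mu.-integrable D (fun x => (g x)%:E) ->
  (\int[mu]_(x in D) (a * f x + b * g x)%:E
   = a%:E * \int[mu]_(x in D) (f x)%:E + b%:E * \int[mu]_(x in D) (g x)%:E)%E.
Proof.
move=> fi gi; under eq_integral do rewrite EFinD !EFinM.
by rewrite integralD ?integralZl //; exact: integrableZl.
Qed.

Lemma integrable_ge0_EFin (f : T -> R) (v : R) :
  (forall x, D x -> 0 <= f x) -> measurable_fun D f ->
  (\int[mu]_(x in D) (f x)%:E = v%:E)%E -> mu.-integrable D (fun x => (f x)%:E).
Proof.
move=> f0 mf fv; apply/integrableP; split; first exact/measurable_EFinP.
rewrite (eq_integral (fun x => (f x)%:E)) ?fv ?ltry // => x /[!inE] Dx.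
by rewrite /= ger0_norm ?f0.
Qed.

End integral_EFin_linear.

Lemma measurable_fun_bigsetU d d' (T : measurableType d) (U : measurableType d')
    (F : nat -> set T) (s : seq nat) (f : T -> U) :
  (forall i, measurable (F i)) -> (forall i, i \in s -> measurable_fun (F i) f) ->
  measurable_fun (\big[setU/set0]_(i <- s) F i) f.
Proof.
move=> mF; elim: s => [_|i s IH fi]; first by rewrite big_nil; exact: measurable_fun_set0.
rewrite big_cons measurable_funU; [split|exact: mF|exact: bigsetU_measurable].
- by apply: fi; rewrite mem_head.
- by apply: IH => j js; apply: fi; rewrite in_cons js orbT.
Qed.

Section derivative_bounds.
Variable R : realType.

Lemma is_derive_continuous (f df : R -> R) :
  (forall x : R, is_derive x 1 f (df x)) -> continuous f.
Proof.
move=> fd x; apply/differentiable_continuous/derivable1_diffP.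
by case: (fd x).
Qed.

Lemma is_derive1 (f : R -> R) (x d : R) : is_derive x 1 f d -> derive1 f x = d.
Proof. by move=> fd; rewrite derive1E derive_val. Qed.

Lemma ge0_from_derive_ge0 (f df : R -> R) :
  (forall x : R, is_derive x 1 f (df x)) -> f 0 = 0 ->
  (forall x, 0 <= x -> 0 <= df x) -> forall x, 0 <= x -> 0 <= f x.
Proof.
move=> fd f0 df0 x x0; rewrite -f0; apply: (@ger0_derive1_ndecry _ _ 0) => //.
- by move=> y; rewrite in_itv /= andbT => y0; rewrite (is_derive1 (fd y)) df0 ?ltW.
- exact/continuous_subspaceT/is_derive_continuous.
Qed.

Lemma sin_le_id (x : R) : 0 <= x -> sin x <= x.
Proof.
move=> x0; rewrite -subr_ge0.
apply: (@ge0_from_derive_ge0 (fun x => x - sin x) (fun x => 1 - cos x)) x0 => [|y _].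
- by rewrite sin0 subr0.
- by rewrite subr_ge0 cos_le1.
Qed.

Lemma cos_ge_quadratic (x : R) : 0 <= x -> 1 - x ^+ 2 / 2 <= cos x.
Proof.
move=> x0; rewrite -subr_ge0.
apply: (@ge0_from_derive_ge0 (fun x => cos x - (1 - x ^+ 2 / 2)) (fun x => x - sin x)) x0
  => [y||y y0].
- by apply: is_derive_eq; rewrite /GRing.scale /=; lra.
- by rewrite cos0 expr0n /= mul0r subr0 subrr.
- by rewrite subr_ge0 sin_le_id.
Qed.

Lemma sin_ge_cubic (x : R) : 0 <= x -> x - x ^+ 3 / 6 <= sin x.
Proof.
move=> x0; rewrite -subr_ge0.
apply: (@ge0_from_derive_ge0 (fun x => sin x - (x - x ^+ 3 / 6))
  (fun x => cos x - (1 - x ^+ 2 / 2))) x0 => [y||y y0].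
- by apply: is_derive_eq; rewrite /GRing.scale /=; lra.
- by rewrite sin0 expr0n /= mul0r subr0 subrr.
- by rewrite subr_ge0 cos_ge_quadratic.
Qed.

Lemma one_sub_sinc_le (x : R) : 0 < x -> 1 - sin x / x <= x ^+ 2 / 6.
Proof.
move=> x0; rewrite lerBlDr -lerBlDl ler_pdivlMr //.
have -> : (1 - x ^+ 2 / 6) * x = x - x ^+ 3 / 6 by ring.
exact: sin_ge_cubic (ltW x0).
Qed.

End derivative_bounds.

Section rayleigh_moments.
Variable R : realType.
Notation mu := (@lebesgue_measure R).
Let gauss (u : R) := expR (- (u ^+ 2) / 2).

Lemma measurable_ge0_set : measurable ([set u | 0 <= u] : set (measurableTypeR R)).
Proof. by rewrite -set_itvcy; exact: measurable_itv. Qed.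

Lemma rayleigh_pdf_ge0 (u : R) : 0 <= u -> 0 <= rayleigh_pdf u.
Proof. by move=> u0; rewrite mulr_ge0 ?expR_ge0. Qed.

Let is_derive_gauss (x : R) : is_derive x 1 gauss (- x * gauss x).
Proof.
have -> : gauss = expR \o (fun x => - (x ^+ 2) / 2) by [].
by apply: is_derive_eq; rewrite /GRing.scale /=; field.
Qed.

Lemma continuous_rayleigh_pdf : continuous (@rayleigh_pdf R).
Proof.
have -> : @rayleigh_pdf R = fun x => x * gauss x by [].
move=> x; apply: continuousM; first exact: cvg_id.
exact: is_derive_continuous is_derive_gauss x.
Qed.

Lemma cvgy0_le_div (c : R) (f : R -> R) :
  (forall x, 1 <= x -> `|f x| <= c / x) -> f x @[x --> +oo] --> 0.
Proof.
move=> fc; apply/cvgr0Pnorm_lt => e e0; near=> x.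
have x1 : 1 <= x by near: x; apply: nbhs_pinfty_ge; exact: num_real.
have xe : c / e < x by near: x; apply: nbhs_pinfty_gt; exact: num_real.
apply: le_lt_trans (fc x x1) _.
by rewrite ltr_pdivrMr ?(lt_le_trans ltr01) // mulrC -ltr_pdivrMr.
Unshelve. all: end_near. Qed.

(* [expR s >= 1 + s^2/2] at [s = x^2/2] gives a decay of order [x^-2]. *)
Let gauss_tail_le (x : R) : 1 <= x -> (x ^+ 2 + 2) * gauss x <= 24 / x.
Proof.
move=> x1; have x0 : 0 < x by apply: lt_le_trans x1.
have Y0 := expR_gt0 (x ^+ 2 / 2).
have -> : gauss x = (expR (x ^+ 2 / 2))^-1 by rewrite /gauss -expRN mulNr.
have := @expR_ge1Dxn R (x ^+ 2 / 2) 1 (divr_ge0 (sqr_ge0 x) (ler0n _ 2)).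
have -> : (x ^+ 2 / 2) ^+ 2 / 1`!.+1%:R = x ^+ 4 / 8.
  by rewrite (_ : 1`!.+1%:R = 2 :> R) //; field.
have x3 : x ^+ 3 <= x ^+ 4 by rewrite [x ^+ 4]exprS ler_peMl // exprn_ge0 // ltW.
have x4 : x <= x ^+ 4 by rewrite exprS ler_peMr // ?(ltW x0) // exprn_ege1.
move=> HY; rewrite ler_pdivrMr // mulrAC ler_pdivlMr //.
have -> : (x ^+ 2 + 2) * x = x ^+ 3 + 2 * x by ring.
lra.
Qed.

Let integral_ge0_antiderivative (f F : R -> R) (l : R) :
  (forall x, 0 <= x -> 0 <= f x) -> continuous f ->
  (forall x : R, is_derive x 1 F (f x)) -> F x @[x --> +oo] --> l ->
  (\int[mu]_(x in [set x : R | (0 <= x)%R]) (f x)%:E = (l - F 0)%:E)%E.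
Proof.
move=> f0 cf dF Fl; rewrite -set_itvcy EFinB.
apply: ge0_continuous_FTC2y => //.
- exact: continuous_subspaceT.
- exact/cvg_at_right_filter/(is_derive_continuous dF).
- by move=> x _; rewrite (is_derive1 (dF x)).
Qed.

Lemma E_U1 : E_U (fun=> 1) = 1%:E :> \bar R.
Proof.
have dF (x : R) : is_derive x 1 (fun x => - gauss x) (rayleigh_pdf x).
  by apply: is_derive_eq; rewrite /GRing.scale /rayleigh_pdf /=; field.
have Fl : - gauss x @[x --> +oo] --> 0.
  rewrite -oppr0; apply: cvgN; apply: (@cvgy0_le_div 24) => x x1.
  apply: le_trans (gauss_tail_le x1); rewrite ger0_norm ?expR_ge0 //.
  by rewrite ler_peMl ?expR_ge0 // ler_wpDl ?sqr_ge0 ?ler1n.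
rewrite /E_U; under eq_integral do rewrite mul1r.
rewrite (integral_ge0_antiderivative rayleigh_pdf_ge0 continuous_rayleigh_pdf dF Fl).
by rewrite /gauss expr0n /= oppr0 mul0r expR0 sub0r opprK.
Qed.

Lemma E_U_sqr : E_U (fun u => u ^+ 2) = 2%:E :> \bar R.
Proof.
have f0 (u : R) : 0 <= u -> 0 <= u ^+ 2 * rayleigh_pdf u.
  by move=> u0; rewrite mulr_ge0 ?sqr_ge0 ?rayleigh_pdf_ge0.
have cf : continuous (fun u : R => u ^+ 2 * rayleigh_pdf u).
  move=> x; apply: (@continuousM _ _ (fun u : R => u ^+ 2) (@rayleigh_pdf R)).
    exact: exprn_continuous.
  exact: continuous_rayleigh_pdf.
have dF (x : R) :
    is_derive x 1 (fun x => - ((x ^+ 2 + 2) * gauss x)) (x ^+ 2 * rayleigh_pdf x).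
  by apply: is_derive_eq; rewrite /GRing.scale /rayleigh_pdf /gauss /=; field.
have Fl : - ((x ^+ 2 + 2) * gauss x) @[x --> +oo] --> 0.
  rewrite -oppr0; apply: cvgN; apply: (@cvgy0_le_div 24) => x x1.
  by rewrite ger0_norm ?gauss_tail_le // mulr_ge0 ?expR_ge0 // addr_ge0 ?sqr_ge0.
rewrite /E_U (integral_ge0_antiderivative f0 cf dF Fl).
by rewrite /gauss expr0n /= oppr0 mul0r expR0 add0r mulr1 opprK add0r.
Qed.

Definition E_U_integrable (f : R -> R) :=
  mu.-integrable [set u : R | (0 <= u)%R] (fun u => (f u * rayleigh_pdf u)%:E).

Lemma E_U_comb (a b : R) (f g : R -> R) : E_U_integrable f -> E_U_integrable g ->
  E_U (fun u => a * f u + b * g u) = (a%:E * E_U f + b%:E * E_U g)%E.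
Proof.
move=> fi gi; rewrite /E_U -integral_EFin_comb //; last exact: measurable_ge0_set.
by apply: eq_integral => u _; rewrite mulrDl !mulrA.
Qed.

Lemma E_U_integrable_comb (a b : R) (f g : R -> R) :
  E_U_integrable f -> E_U_integrable g -> E_U_integrable (fun u => a * f u + b * g u).
Proof.
move=> fi gi.
apply: (eq_integrable measurable_ge0_set _ _ _
  (integrable_EFin_comb measurable_ge0_set a b fi gi)).
by move=> u _; rewrite mulrDl !mulrA.
Qed.

Lemma E_U_integrable_moment (f : R -> R) (v : R) :
  (forall u, 0 <= u -> 0 <= f u) -> measurable_fun [set u : R | (0 <= u)%R] f ->
  E_U f = v%:E -> E_U_integrable f.
Proof.
move=> f0 mf fv; apply: integrable_ge0_EFin fv.
- by move=> u u0; rewrite mulr_ge0 ?f0 ?rayleigh_pdf_ge0.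
- apply: measurable_funM mf _.
  exact: measurable_funTS (continuous_measurable_fun continuous_rayleigh_pdf).
Qed.

Lemma E_U_integrable1 : E_U_integrable (fun=> 1).
Proof. by apply: E_U_integrable_moment E_U1 => //; exact: measurable_cst. Qed.

Lemma E_U_integrable_sqr : E_U_integrable (fun u => u ^+ 2).
Proof.
apply: E_U_integrable_moment E_U_sqr => [u _|]; first exact: sqr_ge0.
exact/measurable_funX/measurable_id.
Qed.

Lemma E_U_integrable_dominated (f : R -> R) (c : R) :
  measurable_fun [set u : R | (0 <= u)%R] f ->
  (forall u, 0 <= u -> `|f u| <= c * (1 + u ^+ 2)) -> E_U_integrable f.
Proof.
move=> mf fc.
have mS := measurable_ge0_set.
apply: le_integrable (E_U_integrable_comb c c E_U_integrable1 E_U_integrable_sqr) => //.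
- apply/measurable_EFinP/measurable_funM => //.
  exact: measurable_funTS (continuous_measurable_fun continuous_rayleigh_pdf).
- move=> u u0; rewrite /= !lee_fin !normrM ler_wpM2r // -mulrDr.
  exact: le_trans (fc u u0) (ler_norm _).
Qed.

Lemma E_U_integrable_id : E_U_integrable (fun u : R => u).
Proof.
apply: (@E_U_integrable_dominated _ 1) => [|u u0]; first exact: measurable_id.
by rewrite ger0_norm // mul1r; have := sqr_ge0 (u - 1); nra.
Qed.

End rayleigh_moments.

Section interval_integrals.
Variable R : realType.
Notation mu := (@lebesgue_measure R).

Lemma integral_itv_co_split (f : R -> R) (a b c : R) : a <= b -> b <= c ->
  measurable_fun `[a, c[ f ->
  (\int[mu]_(x in `[a, c[) (f x)%:E =
   \int[mu]_(x in `[a, b[) (f x)%:E + \int[mu]_(x in `[b, c[) (f x)%:E)%E.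
Proof.
move=> ab bc mf.
have split_itv : `[a, c[%classic = `[a, b[%classic `|` `[b, c[%classic :> set R.
  by rewrite -(@itv_bndbnd_setU _ _ _ (BLeft b)) ?bnd_simp.
rewrite split_itv integral_setU //; first by rewrite -split_itv; exact/measurable_EFinP.
apply/disj_setPS => x [] /=; rewrite !in_itv /= => /andP[_ xb] /andP[bx _].
by move: (lt_le_trans xb bx); rewrite ltxx.
Qed.

Lemma integral_affine_cos (A B a b c : R) : a <= b ->
  (\int[mu]_(t in `[a, b[) (A + B * cos (t - c))%:E
   = (A * (b - a) + B * (sin (b - c) - sin (a - c)))%:E)%E.
Proof.
rewrite le_eqVlt => /predU1P[<-|ab].
  by rewrite set_itvco0 integral_set0 !subrr mulr0 mulr0 addr0.
have dF (x : R) :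
    is_derive x 1 (fun t => A * t + B * sin (t - c)) (A + B * cos (x - c)).
  by apply: is_derive_eq; rewrite /GRing.scale /=; ring.
have cf : continuous (fun t => A + B * cos (t - c)).
  by move=> x; apply/differentiable_continuous/derivable1_diffP.
rewrite integral_itv_bndo_bndc; last first.
  by apply/measurable_EFinP/measurable_funTS; exact: continuous_measurable_fun.
rewrite (@continuous_FTC2 _ _ (fun t => A * t + B * sin (t - c))) //.
- by congr (_%:E); ring.
- exact: continuous_subspaceT.
- split; first by move=> x _; case: (dF x).
  + exact/cvg_at_right_filter/(is_derive_continuous dF).
  + exact/cvg_at_left_filter/(is_derive_continuous dF).
- by move=> x _; rewrite (is_derive1 (dF x)).
Qed.

End interval_integrals.

Section phase_quantizer.
Variables (R : realType) (Np : nat).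
Hypothesis Np_gt0 : (0 < Np)%N.
Notation mu := (@lebesgue_measure R).
Local Notation h := (phase_h R Np).

Lemma phase_h_gt0 : 0 < h.
Proof. by rewrite divr_gt0 ?pi_gt0 ?ltr0n. Qed.

Lemma phase_q_nondecreasing : {homo @phase_q R Np : x y / x <= y}.
Proof.
have h2 : 0 < 2 * h by rewrite mulr_gt0 ?phase_h_gt0.
move=> x y xy; rewrite /phase_q ler_pM2r ?phase_h_gt0 // lerD2r ler_pM2l // ler_int.
by apply: le_floor; rewrite ler_pM2r ?invr_gt0.
Qed.

Lemma phase_q_cell (m : int) (t : R) :
  2 * h * m%:~R <= t < 2 * h * (m + 1)%:~R -> phase_q Np t = (2 * m%:~R + 1) * h.
Proof.
have h2 : 0 < 2 * h by rewrite mulr_gt0 ?phase_h_gt0.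
move=> /andP[lo hi]; rewrite /phase_q (@floor_def _ _ m) //.
by rewrite ler_pdivlMr // ltr_pdivrMr // ![_ * (2 * h)]mulrC lo hi.
Qed.

Definition cos_phase_err (t : R) : R := cos (t - phase_q Np t).

Lemma measurable_cos_phase_err : measurable_fun setT cos_phase_err.
Proof.
apply: measurableT_comp; first exact: continuous_measurable_fun (@continuous_cos R).
by apply: measurable_funB => //; exact: nondecreasing_measurable phase_q_nondecreasing.
Qed.

Section phase_affine.
Variables A B : R.
Let measurable_affine (D : set R) : measurable_fun D (fun t => A + B * cos_phase_err t).
Proof.
apply: measurable_funTS; apply: measurable_funD => //.
by apply: measurable_funM => //; exact: measurable_cos_phase_err.
Qed.

(* For odd [Np] the circle ]-pi, pi] is not a union of phase cells, hence we
   integrate over arbitrary periods; each one meets at most two cells. *)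
Lemma integral_phase_period (a : R) :
  (\int[mu]_(t in `[a, (a + 2 * h)%R[) (A + B * cos_phase_err t)%:E
   = (2 * h * A + 2 * B * sin h)%:E)%E.
Proof.
have h2 : 0 < 2 * h by rewrite mulr_gt0 ?phase_h_gt0.
set m := Num.floor (a / (2 * h)); set b := 2 * h * (m + 1)%:~R.
have /andP[lo hi] := floor_itv (a / (2 * h)); rewrite -/m in lo hi.
have ma : 2 * h * m%:~R <= a by rewrite mulrC -ler_pdivlMr.
have ab : a < b by rewrite /b mulrC -ltr_pdivrMr.
have bc : b <= a + 2 * h by rewrite /b intrD mulrDr mulr1 lerD2r.
rewrite (@integral_itv_co_split _ _ a b) ?(ltW ab) //.
rewrite (@eq_integral _ _ _ mu _
    (fun t : R => (A + B * cos (t - (2 * m%:~R + 1) * h))%:E)); last first.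
  move=> t /[!inE] /= /[!in_itv] /= /andP[a_le_t t_lt_b].
  by rewrite /cos_phase_err (@phase_q_cell m) // (le_trans ma a_le_t) t_lt_b.
rewrite [X in (_ + X)%E](@eq_integral _ _ _ mu _
    (fun t : R => (A + B * cos (t - (2 * (m + 1)%:~R + 1) * h))%:E)); last first.
  move=> t /[!inE] /= /[!in_itv] /= /andP[bt ta].
  rewrite /cos_phase_err (@phase_q_cell (m + 1)) // bt /=.
  by rewrite (lt_le_trans ta) // intrD mulrDr mulr1 lerD2r ltW.
rewrite !integral_affine_cos ?(ltW ab) // -EFinD; congr (_%:E).
have -> : b - (2 * m%:~R + 1) * h = h by rewrite /b intrD; ring.
have -> : a + 2 * h - (2 * (m + 1)%:~R + 1) * h = a - (2 * m%:~R + 1) * h.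
  by rewrite intrD; ring.
have -> : b - (2 * (m + 1)%:~R + 1) * h = - h by rewrite /b intrD; ring.
rewrite sinN; ring.
Qed.

Lemma integral_phase_periods (a : R) (n : nat) :
  (\int[mu]_(t in `[a, (a + n%:R * (2 * h))%R[) (A + B * cos_phase_err t)%:E
   = (n%:R * (2 * h * A + 2 * B * sin h))%:E)%E.
Proof.
have h2 : 0 < 2 * h by rewrite mulr_gt0 ?phase_h_gt0.
elim: n => [|n IH]; first by rewrite !mul0r addr0 set_itvco0 integral_set0.
rewrite (@integral_itv_co_split _ _ a (a + n%:R * (2 * h))); last 3 first.
- by rewrite lerDl mulr_ge0 // ltW.
- by rewrite lerD2l ler_pM2r // ler_nat.
- exact: measurable_affine.
have -> : a + n.+1%:R * (2 * h) = (a + n%:R * (2 * h)) + 2 * h.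
  by rewrite -addn1 natrD; ring.
by rewrite integral_phase_period IH -EFinD -addn1 natrD; congr (_%:E); ring.
Qed.

Lemma integral_phase_affine :
  (\int[mu]_(t in [set t : R | (- pi < t <= pi)%R]) (A + B * cos_phase_err t)%:E
   = (2 * pi * (A + B * (1 - eta R Np)))%:E)%E.
Proof.
rewrite -set_itvoc integral_itv_obnd_cbnd ?measurable_EFinP ?measurable_affine //.
rewrite -integral_itv_bndo_bndc ?measurable_EFinP ?measurable_affine //.
have Np0 : Np%:R != 0 :> R by rewrite pnatr_eq0 -lt0n.
have full_circle : - pi + Np%:R * (2 * h) = pi :> R by rewrite /phase_h; field.
rewrite -[X in `[_, X[%classic]full_circle integral_phase_periods; congr (_%:E).
have pi0 : pi != 0 :> R by rewrite gt_eqF ?pi_gt0.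
rewrite /eta /phase_h; move: pi0; move: (pi : R) => P P0.
by field; rewrite Np0 P0.
Qed.

End phase_affine.

Lemma E_joint_phase_affine (A B : R -> R) :
  E_joint (fun u t => A u + B u * cos_phase_err t)
  = E_U (fun u => A u + (1 - eta R Np) * B u).
Proof.
apply: eq_integral => u _.
have pi0 : pi != 0 :> R by rewrite gt_eqF ?pi_gt0.
set c := rayleigh_pdf u / (2 * pi).
under eq_integral do rewrite mulrDl mulrAC.
rewrite integral_phase_affine /c; congr (_%:E).
by move: pi0; move: (pi : R) => P P0; field.
Qed.

End phase_quantizer.

Lemma sq_errE (R : realType) (sigma : R) (Q : R -> R) (Np : nat) (u t : R) :
  sq_err sigma Q Np u t
  = sigma ^+ 2 * (u ^+ 2 + Q u ^+ 2) + (- 2 * sigma ^+ 2 * u * Q u) * cos_phase_err Np t.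
Proof.
rewrite /sq_err /cos_phase_err cosB.
have c2s2 := cos2Dsin2 t; have c2s2q := cos2Dsin2 (phase_q Np t).
set c := cos t in c2s2 *; set s := sin t in c2s2 *.
set cq := cos (phase_q Np t) in c2s2q *; set sq := sin (phase_q Np t) in c2s2q *.
have -> : (sigma * u * c - sigma * Q u * cq) ^+ 2 + (sigma * u * s - sigma * Q u * sq) ^+ 2
  = sigma ^+ 2 * u ^+ 2 * (c ^+ 2 + s ^+ 2) + sigma ^+ 2 * Q u ^+ 2 * (cq ^+ 2 + sq ^+ 2)
    - 2 * sigma ^+ 2 * u * Q u * (c * cq + s * sq) by ring.
by rewrite c2s2 c2s2q; ring.
Qed.

Section bounded_reconstruction.
Variables (R : realType) (Q : R -> R) (B : R).
Hypothesis mQ : measurable_fun [set u : R | (0 <= u)%R] Q.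
Hypothesis QB : forall u, 0 <= u -> `|Q u| <= B.

Let E_U_integrable_le_sqr (f : R -> R) :
  measurable_fun [set u : R | (0 <= u)%R] f ->
  (forall u, 0 <= u -> `|f u| <= (u + B) ^+ 2) -> E_U_integrable f.
Proof.
move=> mf fB; apply: (E_U_integrable_dominated (c := 2 + 2 * B ^+ 2) mf) => u u0.
apply: le_trans (fB u u0) _; have := sqr_ge0 (u - B); have := sqr_ge0 (u * B); nra.
Qed.

Lemma E_U_integrable_sqr_err : E_U_integrable (fun u => (u - Q u) ^+ 2).
Proof.
apply: E_U_integrable_le_sqr => [|u u0].
  exact/measurable_funX/measurable_funB.
have := QB u0; rewrite ler_norml => /andP[? ?].
rewrite ger0_norm ?sqr_ge0 //; nra.
Qed.

Lemma E_U_integrable_mulQ : E_U_integrable (fun u => u * Q u).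
Proof.
apply: E_U_integrable_le_sqr => [|u u0]; first exact: measurable_funM.
have := QB u0; rewrite normrM (ger0_norm u0) => ?.
have B0 : 0 <= B by apply: le_trans (QB u0).
nra.
Qed.

Lemma E_U_integrable_sqrQ : E_U_integrable (fun u => Q u ^+ 2).
Proof.
apply: E_U_integrable_le_sqr => [|u u0]; first exact: measurable_funX.
have := QB u0; rewrite ler_norml => /andP[? ?].
rewrite ger0_norm ?sqr_ge0 //; nra.
Qed.

Lemma E_U_integrable_errQ : E_U_integrable (fun u => (u - Q u) * Q u).
Proof.
apply: E_U_integrable_le_sqr => [|u u0].
  by apply: measurable_funM => //; exact: measurable_funB.
have B0 : 0 <= B by apply: le_trans (QB u0).
rewrite normrM expr2; apply: ler_pM => //; last by rewrite (le_trans (QB u0)) ?lerDr.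
by apply: le_trans (ler_normB _ _) _; rewrite ger0_norm // lerD2l QB.
Qed.

Lemma E_joint_sq_err (sigma : R) (Np : nat) : (0 < Np)%N ->
  E_joint (sq_err sigma Q Np)
  = ((sigma ^+ 2)%:E * C_LM Q + (2 * sigma ^+ 2 * eta R Np)%:E * M_a Q)%E.
Proof.
move=> Np0.
have -> : sq_err sigma Q Np = fun u t => sigma ^+ 2 * (u ^+ 2 + Q u ^+ 2)
    + (- 2 * sigma ^+ 2 * u * Q u) * cos_phase_err Np t.
  by apply/funext => u; apply/funext => t; rewrite sq_errE.
rewrite E_joint_phase_affine //.
rewrite (_ : (fun u => _) = fun u => sigma ^+ 2 * (u - Q u) ^+ 2
    + (2 * sigma ^+ 2 * eta R Np) * (u * Q u)); last by apply/funext => u; ring.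
by rewrite E_U_comb ?E_U_integrable_sqr_err ?E_U_integrable_mulQ.
Qed.

Section orthogonal_error.
Hypothesis error_orthogonal : E_U (fun u => (u - Q u) * Q u) = 0%E.

Lemma M_a_orthogonal : M_a Q = E_U (fun u => Q u ^+ 2).
Proof.
rewrite /M_a (_ : (fun u => _) = fun u => 1 * Q u ^+ 2 + 1 * ((u - Q u) * Q u)).
  by rewrite E_U_comb ?E_U_integrable_sqrQ ?E_U_integrable_errQ // error_orthogonal
    mul1e mule0 adde0.
by apply/funext => u; ring.
Qed.

Lemma C_LM_orthogonal : C_LM Q = (2%:E - M_a Q)%E.
Proof.
rewrite /C_LM (_ : (fun u => _) = fun u => 1 * u ^+ 2
    + -1 * (1 * (u * Q u) + 1 * ((u - Q u) * Q u))); last by apply/funext => u; ring.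
rewrite !E_U_comb ?E_U_integrable_sqr ?E_U_integrable_comb ?E_U_integrable_mulQ
  ?E_U_integrable_errQ //.
by rewrite E_U_sqr error_orthogonal mule0 adde0 !mul1e mulN1e.
Qed.

Lemma M_a_orthogonal_ge0 : (0 <= M_a Q)%E.
Proof.
rewrite M_a_orthogonal; apply: integral_ge0 => u u0.
by rewrite lee_fin mulr_ge0 ?sqr_ge0 ?rayleigh_pdf_ge0.
Qed.

End orthogonal_error.

Lemma M_a_fin_num : M_a Q \is a fin_num.
Proof.
by apply: integrable_fin_num; [exact: measurable_ge0_set|exact: E_U_integrable_mulQ].
Qed.

End bounded_reconstruction.

Section scalar_quantizer.
Variables (R : realType) (N : nat) (t y : nat -> R) (Q : R -> R).
Hypothesis N_gt0 : (0 < N)%N.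
Hypothesis Qt : quantizer_with N t y Q.
Notation mu := (@lebesgue_measure R).

Lemma quantizer_threshold_le i j : (i <= j < N)%N -> t i <= t j.
Proof.
case: Qt => _ [t_incr _] /andP[]; elim: j => [|j IH]; first by rewrite leqn0 => /eqP->.
rewrite leq_eqVlt => /predU1P[-> //|ij1] j1N.
apply: le_trans (IH ij1 (ltnW j1N)) _.
exact/ltW/t_incr.
Qed.

Lemma quantizer_threshold_ge0 i : (i < N)%N -> 0 <= t i.
Proof. by move=> iN; case: Qt => <- _; apply: quantizer_threshold_le. Qed.

Lemma qcell_ge0 i u : (i < N)%N -> qcell t N i u -> 0 <= u.
Proof.
move=> /quantizer_threshold_ge0 ti0; rewrite /qcell; case: ifP => _ /=.
- by case/andP => + _; exact: le_trans.
- exact: le_trans.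
Qed.

Lemma qcell_cover u : 0 <= u -> exists2 i, (i < N)%N & qcell t N i u.
Proof.
move=> u0.
have ex_i : exists i, (i < N)%N && (t i <= u).
  by exists 0%N; rewrite N_gt0 /=; case: Qt => ->.
have i_bnd i : (i < N)%N && (t i <= u) -> (i <= N)%N by case/andP => /ltnW.
case: (ex_maxnP ex_i i_bnd) => i /andP[iN tiu] imax.
exists i => //; rewrite /qcell; case: ifP => // i1N /=.
rewrite tiu ltNge; apply/negP => ti1u.
by have := imax i.+1; rewrite i1N ti1u ltnn => /(_ isT).
Qed.

Lemma qcell_disjoint i j u : (i < N)%N -> (j < N)%N ->
  qcell t N i u -> qcell t N j u -> i = j.
Proof.
wlog ij : i j / (i <= j)%N.
  move=> W iN jN ci cj; case: (leqP i j) => [ij|ji]; first exact: W.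
  by apply/esym/W => //; exact: ltnW.
move=> iN jN; rewrite leq_eqVlt in ij; case/predU1P: ij => [// | ij].
rewrite /qcell (leq_ltn_trans ij jN) /= => /andP[_ ui1].
have ti1j : t i.+1 <= t j by apply: quantizer_threshold_le; rewrite ij.
case: ifP => _ /=; [case/andP => tju _ | move=> tju];
  by move: (lt_le_trans ui1 (le_trans ti1j tju)); rewrite ltxx.
Qed.

Lemma measurable_qcell i : measurable (qcell t N i : set (measurableTypeR R)).
Proof.
by rewrite /qcell; case: ifP => _; [rewrite -set_itvco | rewrite -set_itvcy];
  exact: measurable_itv.
Qed.

Lemma ge0_set_bigsetU_qcell :
  [set u : R | (0 <= u)%R] = \big[setU/set0]_(i <- iota 0 N) qcell t N i.
Proof.
rewrite -bigcup_seq; apply/seteqP; split => u.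
- by case/qcell_cover => i iN ciu; exists i; rewrite //= mem_iota.
- by case=> i /=; rewrite mem_iota => iN; apply: qcell_ge0.
Qed.

Lemma quantizer_qcell i u : (i < N)%N -> qcell t N i u -> Q u = y i.
Proof. by case: Qt => _ [_ Qy]; apply: Qy. Qed.

Lemma quantizer_bounded u : 0 <= u -> `|Q u| <= \sum_(i < N) `|y i|.
Proof.
case/qcell_cover => i iN /(quantizer_qcell iN) ->.
by rewrite (bigD1 (Ordinal iN)) //= lerDl sumr_ge0.
Qed.

Lemma measurable_quantizer : measurable_fun [set u : R | (0 <= u)%R] Q.
Proof.
rewrite ge0_set_bigsetU_qcell; apply: measurable_fun_bigsetU => [|i].
  exact: measurable_qcell.
rewrite mem_iota => iN; apply: (eq_measurable_fun (cst (y i))) => // u.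
by rewrite inE => /(quantizer_qcell iN).
Qed.

Hypothesis centroid : forall i, (i < N)%N ->
  ((y i)%:E * \int[mu]_(u in qcell t N i) (rayleigh_pdf u)%:E
   = \int[mu]_(u in qcell t N i) (u * rayleigh_pdf u)%:E)%E.

Lemma centroid_error_orthogonal : E_U (fun u => (u - Q u) * Q u) = 0%E.
Proof.
have ip : mu.-integrable [set u | 0 <= u] (fun u => (rayleigh_pdf u)%:E).
  apply: (eq_integrable _ _ _ _ (E_U_integrable1 R)) => [|u _].
    exact: measurable_ge0_set.
  by rewrite mul1r.
have iup := E_U_integrable_id R.
have ierr := E_U_integrable_errQ measurable_quantizer quantizer_bounded.
rewrite /E_U ge0_set_bigsetU_qcell integral_bigsetU_EFin; first last.
- by rewrite -ge0_set_bigsetU_qcell; exact: (measurable_int _ ierr).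
- apply/trivIsetP => i j /=; rewrite !mem_iota !add0n => iN jN ij.
  apply/seteqP; split => // u [/= ciu cju].
  by move: ij; rewrite (qcell_disjoint iN jN ciu cju) eqxx.
- exact: iota_uniq.
- exact: measurable_qcell.
rewrite big_seq big1 // => i; rewrite mem_iota add0n => iN.
have mc := measurable_qcell i.
have sub : qcell t N i `<=` [set u | 0 <= u] by move=> u; apply: qcell_ge0.
have [ipc iupc] : mu.-integrable (qcell t N i) (fun u => (rayleigh_pdf u)%:E) /\
    mu.-integrable (qcell t N i) (fun u => (u * rayleigh_pdf u)%:E).
  by split; apply: integrableS mc sub _ => //; exact: measurable_ge0_set.
rewrite (@eq_integral _ _ _ mu _
    (fun u : R => (y i * (u * rayleigh_pdf u) + (- y i ^+ 2) * rayleigh_pdf u)%:E)); last first.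
  by move=> u /[!inE] /(quantizer_qcell iN) ->; congr EFin; ring.
rewrite integral_EFin_comb // -centroid // -(fineK (integrable_fin_num mc ipc)).
by rewrite -!EFinM -EFinD; congr EFin; ring.
Qed.

End scalar_quantizer.

Theorem mainTheorem3 (R : realType) (sigma : R) (Na Np : nat) (Q : R -> R) :
  0 < sigma -> (0 < Na)%N -> (0 < Np)%N -> lloyd_max Na Q ->
  (E_joint (sq_err sigma Q Np)
     = (sigma ^+ 2)%:E * C_LM Q + (2 * sigma ^+ 2 * eta R Np)%:E * M_a Q)%E /\
  (centroid_quantizer Na Q ->
     (M_a Q = 2%:E - C_LM Q)%E /\
     (E_joint (sq_err sigma Q Np)
        = (sigma ^+ 2)%:E * (C_LM Q + 2%:E * (2%:E - C_LM Q) * (eta R Np)%:E))%E /\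
     (E_joint (sq_err sigma Q Np)
        <= (sigma ^+ 2)%:E * (C_LM Q + (2%:E - C_LM Q)
                                 * (pi ^+ 2 / (3 * (Np%:R) ^+ 2))%:E))%E).
Proof.
move=> _ Na0 Np0 [[t [y Qq]] _].
have mQ := measurable_quantizer Na0 Qq; have QB := quantizer_bounded Na0 Qq.
have E_joint_eq := E_joint_sq_err mQ QB sigma Np0.
split=> // -[t' [y' [Qq' centroid]]].
have orth := centroid_error_orthogonal Na0 Qq' centroid.
have M0 := M_a_orthogonal_ge0 mQ QB orth.
rewrite E_joint_eq (C_LM_orthogonal mQ QB orth).
move: M0; rewrite -(fineK (M_a_fin_num mQ QB)) lee_fin; set m := fine _ => m0.
have h0 : 0 < pi / Np%:R :> R by rewrite divr_gt0 ?pi_gt0 ?ltr0n.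
have eta_le := one_sub_sinc_le h0; rewrite -/(eta R Np) in eta_le.
rewrite -!EFinB -!EFinM -!EFinD !lee_fin; split; [|split].
- by congr EFin; ring.
- by congr EFin; ring.
- have -> : pi ^+ 2 / (3 * Np%:R ^+ 2) = (pi / Np%:R) ^+ 2 / 3 :> R.
    by field; rewrite pnatr_eq0 -lt0n.
  have : 0 <= sigma ^+ 2 * (m * ((pi / Np%:R) ^+ 2 / 6 - eta R Np)).
    by rewrite mulr_ge0 ?sqr_ge0 // mulr_ge0 // subr_ge0.
  have -> : 2 - (2 - m) = m by ring.
  lra.
Qed.
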